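(* Let $(X,d)$ be a geodesic metric space and let $K_0,K_1,q$ be integers with $1\le K_0<K_1$ and $q\ge 3$. Suppose every $1/q$-bigon in $X$ is $K_0/2$-thin. Suppose there are geodesics $\gamma:[0,a]\to X$, $\gamma':[0,a']\to X$ with $\gamma(0)=\gamma'(0)$, and real numbers $R>0$, $r_0>0$ with $R+r_0\le\min(a,a')$, such that $d(\gamma(R+r),\gamma'(R+r))\in[K_0,K_1]$ for all $r\in(0,r_0)$. Then $$r_0\le \big(q(K_1-K_0)+1\big)\big(2^{qK_1+1}-1\big)qK_1+1.$$
   Context: A geodesic is a map $\gamma:[0,a]\to X$ with $d(\gamma(u),\gamma(v))=|u-v|$. For $q\ge0$, a $(1,q)$-quasigeodesic is a continuous map $\gamma:[0,L]\to X$ with $|t-t'|-q\le d(\gamma(t),\gamma(t'))\le |t-t'|+q$ for all $t,t'\in[0,L]$; its endpoints are $\gamma(0),\gamma(L)$. A $q$-bigon is a pair of $(1,q)$-quasigeodesics with the same endpoints; their images are its sides. For $K\ge0$ a $q$-bigon is $K$-fat if some point of one side is at distance $\ge K$ from (every point of) the other side, and $K$-thin if it is not $K$-fat. *)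

From Stdlib Require Import Reals.
Open Scope R_scope.

Definition is_metric {X : Type} (d : X -> X -> R) : Prop :=
  (forall x y, 0 <= d x y) /\
  (forall x y, d x y = 0 <-> x = y) /\
  (forall x y, d x y = d y x) /\
  (forall x y z, d x z <= d x y + d y z).

(* gamma : [0,a] -> X, represented as a total function R -> X whose
   values outside [0,a] are irrelevant. *)
Definition is_geodesic {X : Type} (d : X -> X -> R) (gamma : R -> X) (a : R) : Prop :=
  0 <= a /\
  forall u v, 0 <= u <= a -> 0 <= v <= a -> d (gamma u) (gamma v) = Rabs (u - v).

Definition geodesic_space {X : Type} (d : X -> X -> R) : Prop :=
  is_metric d /\
  forall x y : X, exists (gamma : R -> X) (a : R),
    is_geodesic d gamma a /\ gamma 0 = x /\ gamma a = y.

Definition continuous_on_interval {X : Type} (d : X -> X -> R) (gamma : R -> X) (L : R) : Prop :=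
  forall t, 0 <= t <= L -> forall eps, 0 < eps -> exists delta, 0 < delta /\
    forall t', 0 <= t' <= L -> Rabs (t - t') < delta -> d (gamma t) (gamma t') < eps.

Definition is_quasigeodesic {X : Type} (d : X -> X -> R) (q : R) (gamma : R -> X) (L : R) : Prop :=
  0 <= L /\ continuous_on_interval d gamma L /\
  forall t t', 0 <= t <= L -> 0 <= t' <= L ->
    Rabs (t - t') - q <= d (gamma t) (gamma t') <= Rabs (t - t') + q.

Definition is_bigon {X : Type} (d : X -> X -> R) (q : R)
  (g1 : R -> X) (L1 : R) (g2 : R -> X) (L2 : R) : Prop :=
  is_quasigeodesic d q g1 L1 /\ is_quasigeodesic d q g2 L2 /\
  g1 0 = g2 0 /\ g1 L1 = g2 L2.

Definition fat_from {X : Type} (d : X -> X -> R) (K : R)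
  (g1 : R -> X) (L1 : R) (g2 : R -> X) (L2 : R) : Prop :=
  exists t, 0 <= t <= L1 /\ forall s, 0 <= s <= L2 -> K <= d (g1 t) (g2 s).

Definition bigon_fat {X : Type} (d : X -> X -> R) (K : R)
  (g1 : R -> X) (L1 : R) (g2 : R -> X) (L2 : R) : Prop :=
  fat_from d K g1 L1 g2 L2 \/ fat_from d K g2 L2 g1 L1.

Definition bigon_thin {X : Type} (d : X -> X -> R) (K : R)
  (g1 : R -> X) (L1 : R) (g2 : R -> X) (L2 : R) : Prop :=
  ~ bigon_fat d K g1 L1 g2 L2.

From Stdlib Require Import Reals Lra Psatz.
Open Scope R_scope.

(* Along the band, the excess E(s,t) = s + d(gamma s, gamma' t) - t lies in [0, K1].
   For x <= k and k + K1 <= y, the broken paths "gamma from x to k + K1, then a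
   geodesic to gamma' y" and "a geodesic from gamma x to gamma' k, then gamma' from
   k to y" have the same endpoints, and gamma (k + K1) is K0/2-far from the second
   one.  Their defects as quasigeodesics are E(k+K1,y) - E(x,y) and E(x,k) - E(x,y),
   so thinness of 1/q-bigons forces E(x,y) to be more than 1/q below E(x,k) or
   E(k+K1,y).  Halving an interval of length K1 (2^n - 1) n times therefore makes E
   drop by n/q, which for n = q K1 + 1 exceeds K1: the band has length at most
   K1 (2^(q K1 + 1) - 1). *)

Definition lipschitz1_on {X : Type} (d : X -> X -> R) (g : R -> X) (L : R) : Prop :=
  forall t t', 0 <= t <= L -> 0 <= t' <= L -> d (g t) (g t') <= Rabs (t - t').

Definition concat_path {X : Type} (c1 : R -> X) (l1 : R) (c2 : R -> X) : R -> X :=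
  fun t => if Rle_dec t l1 then c1 t else c2 (t - l1).

Lemma concat_path_0 {X : Type} (c1 c2 : R -> X) (l1 : R) :
  0 <= l1 -> concat_path c1 l1 c2 0 = c1 0.
Proof. intros Hl1. unfold concat_path. destruct (Rle_dec 0 l1); [reflexivity | lra]. Qed.

Lemma concat_path_l1 {X : Type} (c1 c2 : R -> X) (l1 : R) :
  concat_path c1 l1 c2 l1 = c1 l1.
Proof. unfold concat_path. destruct (Rle_dec l1 l1); [reflexivity | lra]. Qed.

Lemma concat_path_end {X : Type} (c1 c2 : R -> X) (l1 l2 : R) :
  0 <= l2 -> c1 l1 = c2 0 -> concat_path c1 l1 c2 (l1 + l2) = c2 l2.
Proof.
  intros Hl2 Hjoin. unfold concat_path. destruct (Rle_dec (l1 + l2) l1).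
  - replace l2 with 0 by lra. rewrite Rplus_0_r. exact Hjoin.
  - f_equal. ring.
Qed.

Section MetricSpace.

Variables (X : Type) (d : X -> X -> R).
Hypothesis d_metric : is_metric d.

Lemma dist_sym x y : d x y = d y x.
Proof. destruct d_metric as (_ & _ & Hsym & _). apply Hsym. Qed.

Lemma dist_triangle x y z : d x z <= d x y + d y z.
Proof. destruct d_metric as (_ & _ & _ & Htri). apply Htri. Qed.

Lemma geodesic_lipschitz1 g a : is_geodesic d g a -> lipschitz1_on d g a.
Proof. intros [_ Hg] t t' Ht Ht'. rewrite Hg by assumption. lra. Qed.

Lemma geodesic_dist_origin g a u : is_geodesic d g a -> 0 <= u <= a -> d (g 0) (g u) = u.
Proof. intros [_ Hg] Hu. rewrite Hg by lra. rewrite Rabs_left1 by lra. ring. Qed.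

Lemma geodesic_shift g a x b :
  is_geodesic d g a -> 0 <= x -> 0 <= b -> x + b <= a ->
  is_geodesic d (fun t => g (x + t)) b.
Proof.
  intros [_ Hg] Hx Hb Hxb. split; [assumption |].
  intros u v Hu Hv. rewrite Hg by lra. f_equal. ring.
Qed.

Lemma geodesic_dist_lower c l z s :
  is_geodesic d c l -> 0 <= s <= l -> d (c 0) z + d z (c l) - l <= 2 * d z (c s).
Proof.
  intros Hc Hs.
  assert (H0s : d (c 0) (c s) = s) by (apply (geodesic_dist_origin c l); assumption).
  assert (Hsl : d (c s) (c l) = l - s).
  { destruct Hc as [_ Hc]. rewrite Hc by lra. rewrite Rabs_left1 by lra. ring. }
  pose proof (dist_triangle (c 0) (c s) z) as T1.
  pose proof (dist_triangle z (c s) (c l)) as T2.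
  rewrite (dist_sym (c s) z) in T1. lra.
Qed.

Lemma concat_path_lipschitz1 c1 l1 c2 l2 :
  0 <= l1 -> 0 <= l2 -> lipschitz1_on d c1 l1 -> lipschitz1_on d c2 l2 -> c1 l1 = c2 0 ->
  lipschitz1_on d (concat_path c1 l1 c2) (l1 + l2).
Proof.
  intros Hl1 Hl2 H1 H2 Hjoin.
  assert (Hmixed : forall t t', 0 <= t <= l1 -> l1 < t' <= l1 + l2 ->
            d (c1 t) (c2 (t' - l1)) <= Rabs (t - t')).
  { intros t t' Ht Ht'.
    apply Rle_trans with (d (c1 t) (c1 l1) + d (c1 l1) (c2 (t' - l1)));
      [apply dist_triangle |].
    pose proof (H1 t l1 Ht ltac:(lra)) as Ha.
    rewrite Hjoin in *. pose proof (H2 0 (t' - l1) ltac:(lra) ltac:(lra)) as Hb.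
    rewrite Rabs_left1 in Ha, Hb by lra. rewrite Rabs_left1 by lra. lra. }
  intros t t' Ht Ht'. unfold concat_path.
  destruct (Rle_dec t l1), (Rle_dec t' l1).
  - apply H1; lra.
  - apply Hmixed; lra.
  - rewrite dist_sym, Rabs_minus_sym. apply Hmixed; lra.
  - replace (t - t') with (t - l1 - (t' - l1)) by ring. apply H2; lra.
Qed.

Lemma lipschitz1_quasigeodesic g L e :
  0 <= L -> 0 <= e -> lipschitz1_on d g L -> L <= d (g 0) (g L) + e ->
  is_quasigeodesic d e g L.
Proof.
  intros HL He Hlip Hlen. split; [assumption | split].
  - intros t Ht eps Heps. exists eps. split; [assumption |].
    intros t' Ht' Htt'. eapply Rle_lt_trans; [apply Hlip |]; assumption.
  - intros t t' Ht Ht'. split; [| pose proof (Hlip t t' Ht Ht'); lra].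
    (* Going through g t and g t' along g cannot beat the endpoints by more than e. *)
    assert (Hbound : forall s s', 0 <= s <= s' -> s' <= L ->
              s' - s - e <= d (g s) (g s')).
    { intros s s' Hs Hs'.
      pose proof (Hlip 0 s ltac:(lra) ltac:(lra)) as H0.
      pose proof (Hlip s' L ltac:(lra) ltac:(lra)) as H1.
      rewrite Rabs_left1 in H0, H1 by lra.
      pose proof (dist_triangle (g 0) (g s) (g L)).
      pose proof (dist_triangle (g s) (g s') (g L)). lra. }
    destruct (Rle_dec t t').
    + rewrite Rabs_left1 by lra. pose proof (Hbound t t'). lra.
    + rewrite Rabs_right by lra. rewrite dist_sym. pose proof (Hbound t' t). lra.
Qed.

Lemma concat_geodesic_quasigeodesic c1 l1 c2 l2 e :
  is_geodesic d c1 l1 -> is_geodesic d c2 l2 -> c1 l1 = c2 0 ->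
  0 <= e -> l1 + l2 <= d (c1 0) (c2 l2) + e ->
  is_quasigeodesic d e (concat_path c1 l1 c2) (l1 + l2).
Proof.
  intros Hc1 Hc2 Hjoin He Hlen.
  pose proof (proj1 Hc1). pose proof (proj1 Hc2).
  apply lipschitz1_quasigeodesic; [lra | assumption | |].
  - apply concat_path_lipschitz1; try apply geodesic_lipschitz1; assumption.
  - rewrite concat_path_0, concat_path_end by assumption. assumption.
Qed.

Section CommonOrigin.

Variables (gamma gamma' : R -> X) (a a' : R).
Hypotheses (hg : is_geodesic d gamma a) (hg' : is_geodesic d gamma' a').
Hypothesis common_origin : gamma 0 = gamma' 0.

Lemma abs_sub_le_dist u v :
  0 <= u <= a -> 0 <= v <= a' -> Rabs (u - v) <= d (gamma u) (gamma' v).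
Proof.
  intros Hu Hv.
  pose proof (geodesic_dist_origin gamma a u hg Hu).
  pose proof (geodesic_dist_origin gamma' a' v hg' Hv).
  pose proof (dist_triangle (gamma 0) (gamma u) (gamma' v)).
  pose proof (dist_triangle (gamma 0) (gamma' v) (gamma u)).
  rewrite (dist_sym (gamma' v)) in *. rewrite common_origin in *. apply Rabs_le. lra.
Qed.

Definition excess s t := s + d (gamma s) (gamma' t) - t.

Lemma excess_nonneg s t : 0 <= s <= a -> 0 <= t <= a' -> 0 <= excess s t.
Proof.
  intros Hs Ht. pose proof (abs_sub_le_dist s t Hs Ht) as Habs.
  rewrite Rabs_minus_sym in Habs. pose proof (Rle_abs (t - s)). unfold excess. lra.
Qed.

Section Band.

Variables (K0 K1 eps R0 r0 : R).
Hypothesis d_joins : forall x y : X, exists (g : R -> X) (l : R),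
  is_geodesic d g l /\ g 0 = x /\ g l = y.
Hypothesis bigons_thin : forall (g1 : R -> X) (L1 : R) (g2 : R -> X) (L2 : R),
  is_bigon d eps g1 L1 g2 L2 -> bigon_thin d (K0 / 2) g1 L1 g2 L2.
Hypotheses (eps_nonneg : 0 <= eps) (K1_nonneg : 0 <= K1) (R0_nonneg : 0 <= R0).
Hypotheses (band_in_a : R0 + r0 <= a) (band_in_a' : R0 + r0 <= a').
Hypothesis band : forall u, R0 < u < R0 + r0 -> K0 <= d (gamma u) (gamma' u) <= K1.

Lemma geodesic_joining x y : exists (g : R -> X) (l : R),
  is_geodesic d g l /\ g 0 = x /\ g l = y /\ l = d x y.
Proof.
  destruct (d_joins x y) as (g & l & Hg & Hx & Hy). exists g, l.
  do 3 (split; [assumption |]).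
  rewrite <- Hx, <- Hy. symmetry. apply (geodesic_dist_origin g l); [assumption |].
  pose proof (proj1 Hg). lra.
Qed.

Lemma band_far u v : R0 < u < R0 + r0 -> 0 <= v <= a' -> K0 / 2 <= d (gamma u) (gamma' v).
Proof.
  intros Hu Hv. pose proof (band u Hu).
  pose proof (abs_sub_le_dist u v ltac:(lra) Hv).
  pose proof (proj2 hg' v u Hv ltac:(lra)) as Hvu. rewrite Rabs_minus_sym in Hvu.
  pose proof (dist_triangle (gamma u) (gamma' v) (gamma' u)). lra.
Qed.

Lemma excess_le_band x y : R0 < x -> x <= y -> y < R0 + r0 -> excess x y <= K1.
Proof.
  intros Hx Hxy Hy. pose proof (band x ltac:(lra)).
  pose proof (dist_triangle (gamma x) (gamma' x) (gamma' y)).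
  rewrite (proj2 hg' x y), Rabs_left1 in * by lra. unfold excess. lra.
Qed.

Lemma excess_split x k y :
  R0 < x -> x <= k -> k + K1 <= y -> y < R0 + r0 ->
  excess x y + eps < excess x k \/ excess x y + eps < excess (k + K1) y.
Proof.
  intros Hx Hxk Hky Hy.
  destruct (Rlt_le_dec (excess x y + eps) (excess x k)) as [| Hdefect2]; [now left |].
  destruct (Rlt_le_dec (excess x y + eps) (excess (k + K1) y)) as [| Hdefect1]; [now right |].
  exfalso. remember (k + K1) as u eqn:Hu. unfold excess in Hdefect1, Hdefect2.
  destruct (geodesic_joining (gamma u) (gamma' y)) as (c1 & l1 & Hc1 & Hc10 & Hc1l & El1).
  destruct (geodesic_joining (gamma x) (gamma' k)) as (c2 & l2 & Hc2 & Hc20 & Hc2l & El2).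
  pose proof (proj1 Hc1). pose proof (proj1 Hc2).
  assert (Hside1 : is_geodesic d (fun t => gamma (x + t)) (u - x))
    by (apply (geodesic_shift gamma a x (u - x) hg); lra).
  assert (Hside2 : is_geodesic d (fun t => gamma' (k + t)) (y - k))
    by (apply (geodesic_shift gamma' a' k (y - k) hg'); lra).
  apply (bigons_thin (concat_path (fun t => gamma (x + t)) (u - x) c1) (u - x + l1)
                     (concat_path c2 l2 (fun t => gamma' (k + t))) (l2 + (y - k))).
  - split; [| split; [| split]].
    + apply concat_geodesic_quasigeodesic; try assumption.
      * rewrite Hc10. f_equal. ring.
      * rewrite Hc1l, Rplus_0_r. lra.
    + apply concat_geodesic_quasigeodesic; try assumption.
      * rewrite Hc2l, Rplus_0_r. reflexivity.
      * rewrite Hc20. replace (k + (y - k)) with y by ring. lra.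
    + rewrite !concat_path_0 by lra. rewrite Hc20, Rplus_0_r. reflexivity.
    + rewrite !concat_path_end by (try rewrite Hc10; try rewrite Hc2l; f_equal; ring || lra).
      rewrite Hc1l. f_equal. ring.
  - left. exists (u - x). split; [lra |]. intros s Hs.
    rewrite concat_path_l1. replace (x + (u - x)) with u by ring.
    unfold concat_path. destruct (Rle_dec s l2).
    + pose proof (geodesic_dist_lower c2 l2 (gamma u) s Hc2 ltac:(lra)).
      pose proof (proj2 hg x u ltac:(lra) ltac:(lra)) as Hxu.
      pose proof (abs_sub_le_dist u k ltac:(lra) ltac:(lra)) as Huk.
      pose proof (excess_le_band x k Hx Hxk ltac:(lra)).
      pose proof (band x ltac:(lra)).
      rewrite Rabs_left1 in Hxu by lra. rewrite Rabs_right in Huk by lra.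
      rewrite Hc20, Hc2l in *. unfold excess in *. lra.
    + apply band_far; lra.
Qed.

Lemma excess_decay (n : nat) x y :
  R0 < x -> y < R0 + r0 -> K1 * (2 ^ n - 1) <= y - x -> excess x y + INR n * eps <= K1.
Proof.
  revert x y. induction n as [| n IH]; intros x y Hx Hy Hxy.
  - simpl in *. rewrite Rmult_0_l, Rplus_0_r. apply excess_le_band; lra.
  - assert (Hpow : 1 <= 2 ^ n) by (apply pow_R1_Rle; lra).
    assert (Hhalf : 0 <= K1 * (2 ^ n - 1)) by (apply Rmult_le_pos; lra).
    simpl in Hxy. rewrite S_INR.
    (* Cut [x, y] into two intervals of length at least K1 (2^n - 1) and a gap of length K1. *)
    set (k := x + (y - x - K1) / 2).
    pose proof (IH x k Hx ltac:(unfold k; lra) ltac:(unfold k; lra)).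
    pose proof (IH (k + K1) y ltac:(unfold k; lra) Hy ltac:(unfold k; lra)).
    destruct (excess_split x k y Hx ltac:(unfold k; lra) ltac:(unfold k; lra) Hy); lra.
Qed.

Lemma band_length_le (n : nat) : K1 < INR n * eps -> r0 <= K1 * (2 ^ n - 1).
Proof.
  intros Hn. destruct (Rle_lt_dec r0 (K1 * (2 ^ n - 1))) as [| Hlong]; [assumption | exfalso].
  assert (Hpow : 1 <= 2 ^ n) by (apply pow_R1_Rle; lra).
  assert (HW : 0 <= K1 * (2 ^ n - 1)) by (apply Rmult_le_pos; lra).
  pose (x := R0 + (r0 - K1 * (2 ^ n - 1)) / 2).
  pose proof (excess_decay n x (x + K1 * (2 ^ n - 1))) as Hdecay.
  pose proof (excess_nonneg x (x + K1 * (2 ^ n - 1))) as Hnonneg.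
  unfold x in *. specialize (Hdecay ltac:(lra) ltac:(lra) ltac:(lra)).
  specialize (Hnonneg ltac:(lra) ltac:(lra)). lra.
Qed.

End Band.
End CommonOrigin.
End MetricSpace.

Theorem theorem1p4 (X : Type) (d : X -> X -> R) (K0 K1 q : nat)
  (hX : geodesic_space d)
  (hK0 : (1 <= K0)%nat) (hK01 : (K0 < K1)%nat) (hq : (3 <= q)%nat)
  (hthin : forall (g1 : R -> X) (L1 : R) (g2 : R -> X) (L2 : R),
      is_bigon d (/ INR q) g1 L1 g2 L2 -> bigon_thin d (INR K0 / 2) g1 L1 g2 L2)
  (gamma gamma' : R -> X) (a a' : R)
  (hg : is_geodesic d gamma a) (hg' : is_geodesic d gamma' a')
  (h0 : gamma 0 = gamma' 0)
  (R0 r0 : R) (hR : 0 < R0) (hr0 : 0 < r0) (hRr : R0 + r0 <= Rmin a a')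
  (hdist : forall r, 0 < r < r0 ->
      INR K0 <= d (gamma (R0 + r)) (gamma' (R0 + r)) <= INR K1) :
  r0 <= (INR q * (INR K1 - INR K0) + 1) * (2 ^ (q * K1 + 1) - 1) * INR q * INR K1 + 1.
Proof.
  destruct hX as [Hmetric Hjoins].
  assert (Hq : 3 <= INR q) by (replace 3 with (INR 3) by (simpl; lra); apply le_INR, hq).
  assert (HK01 : INR K0 + 1 <= INR K1) by (rewrite <- S_INR; apply le_INR, hK01).
  assert (HK0 : 0 <= INR K0) by apply pos_INR.
  assert (Hpow : 1 <= 2 ^ (q * K1 + 1)) by (apply pow_R1_Rle; lra).
  assert (Hband : r0 <= INR K1 * (2 ^ (q * K1 + 1) - 1)).
  { apply (band_length_le X d Hmetric gamma gamma' a a' hg hg' h0 (INR K0) (INR K1) (/ INR q)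
             R0 r0 Hjoins hthin); try lra.
    - apply Rlt_le, Rinv_0_lt_compat. lra.
    - pose proof (Rmin_l a a'). lra.
    - pose proof (Rmin_r a a'). lra.
    - intros u Hu. replace u with (R0 + (u - R0)) by ring. apply hdist. lra.
    - replace (INR (q * K1 + 1) * / INR q) with (INR K1 + / INR q).
      + pose proof (Rinv_0_lt_compat (INR q)). lra.
      + rewrite plus_INR, mult_INR. simpl. field. lra. }
  assert (0 <= ((INR q * (INR K1 - INR K0) + 1) * INR q - 1)
                * ((2 ^ (q * K1 + 1) - 1) * INR K1)) by (apply Rmult_le_pos; nra).
  nra.
Qed.
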